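(* Let $\lambda>0$, $d_v>0$, $\epsilon\ge0$, $m=\lambda\pi d_v^2$, $k\ge0$, and let $\tilde{\mathbf x}_1,\dots,\tilde{\mathbf x}_k\in\mathbb R^2$ be given, with $f(\mathbf x)$ the set of their orderings. With $A_i=\mathbf b(\tilde{\mathbf x}_i,\epsilon)$ the closed Euclidean ball of radius $\epsilon$ about $\tilde{\mathbf x}_i$ and $|A_i|$ its Lebesgue measure, $$\mathbb P\big[\Delta_s(f(\mathbf x),F(\mathbf 0))\le\epsilon\big]\le m^k e^{-m}\prod_{i=1}^k\frac{|A_i|}{\pi d_v^2}.$$
   Context: Landmarks seen from the origin are the points of a homogeneous Poisson point process $\Phi_{\mathbf 0}$ of intensity $\lambda$ on $\mathbb R^2$; a landmark is visible from $\mathbf 0$ if its distance to $\mathbf 0$ is at most $d_v$, and $N_{\mathbf 0}$ is the number of visible landmarks. The random measurement $F(\mathbf 0)$ is the set of all $N_{\mathbf 0}\times 2$ matrices whose rows are the positions of the visible landmarks (relative to $\mathbf 0$) listed in some order; $f(\mathbf x)$ is the set of all $k\times2$ matrices whose rows are $\tilde{\mathbf x}_1,\dots,\tilde{\mathbf x}_k$ in some order. For matrices, $\Delta_v(\mathbf v,\mathbf w)=\max_i\|\mathbf v_{i,:}-\mathbf w_{i,:}\|_2$ if they have the same number of rows (equal to $0$ if both have zero rows) and $\infty$ otherwise; $\Delta_s(f,F)=\min_{\mathbf v\in f,\mathbf w\in F}\Delta_v(\mathbf v,\mathbf w)$. *)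

From HB Require Import structures.
From mathcomp Require Import all_boot all_order all_algebra.
From mathcomp Require Import all_classical all_reals all_analysis.
Set Implicit Arguments. Unset Strict Implicit. Unset Printing Implicit Defensive.
Import Order.TTheory GRing.Theory Num.Theory.
Import numFieldNormedType.Exports.
Local Open Scope classical_set_scope.
Local Open Scope ring_scope.

Section Landmarks.
Variable R : realType.

Definition dist2 (p q : R * R) : R :=
  Num.sqrt ((p.1 - q.1) ^+ 2 + (p.2 - q.2) ^+ 2).

Definition cball2 (c : R * R) (r : R) : set (R * R) :=
  [set p | dist2 p c <= r].

Definition leb2 : set (R * R) -> \bar R :=
  ((@lebesgue_measure R) \x (@lebesgue_measure R))%E.

(* A N x 2 matrix is represented by the sequence of its rows. *)
Definition Delta_v (v w : seq (R * R)) : \bar R :=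
  if size v == size w then
    ((\big[Num.max/0]_(i < size v) dist2 (nth (0, 0) v i) (nth (0, 0) w i))%:E)%E
  else (+oo)%E.

Definition orderings (s : seq (R * R)) : set (seq (R * R)) :=
  [set t | perm_eq t s].

(* Delta_s(f, F) = min over v in f, w in F of Delta_v(v, w)
   (the sets are finite, so the min is the infimum). *)
Definition Delta_s (f F : set (seq (R * R))) : \bar R :=
  ereal_inf [set Delta_v v w | v in f & w in F].

End Landmarks.

From HB Require Import structures.
From mathcomp Require Import all_boot all_order all_algebra.
From mathcomp Require Import all_classical all_reals all_analysis.
From mathcomp Require Import fingroup perm.
Import Order.TTheory GRing.Theory Num.Theory.
Import numFieldNormedType.Exports.
Local Open Scope classical_set_scope.
Local Open Scope ring_scope.
Set Implicit Arguments. Unset Strict Implicit. Unset Printing Implicit Defensive.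

(* If Delta_s <= eps then, up to the null event that some landmark lies outside
   the visibility disk D (the Janossy density vanishes there), exactly k
   landmarks are seen and, for some permutation p of the targets, landmark i
   lies in A_(p i).  By the Janossy law each such event has probability
   e^-m/k! * prod_i lam |A_i `&` D| <= e^-m/k! * prod_i lam |A_i|, and the union
   bound over the k! permutations gives e^-m prod_i lam |A_i|, which is
   m^k e^-m prod_i |A_i| / (pi dv^2).  The event is measurable because it only
   depends on which of the finitely many sets D, A_1, ..., A_k contain each
   landmark. *)

Section All2.
Variables (S T : eqType) (r : S -> T -> bool).

Lemma all2_size s t : all2 r s t -> size s = size t.
Proof. by rewrite all2E => /andP[/eqP]. Qed.

Lemma all2_nthP x0 y0 s t : size s = size t ->
  reflect (forall i, (i < size s)%N -> r (nth x0 s i) (nth y0 t i)) (all2 r s t).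
Proof.
move=> sz; rewrite all2E sz eqxx /=.
by apply: (iffP (all_nthP (x0, y0))); rewrite size_zip sz minnn => rst i lt_i;
  have := rst i lt_i; rewrite nth_zip.
Qed.

Lemma all2_perm_r s t t' : perm_eq t' t -> all2 r s t' ->
  exists2 s', perm_eq s' s & all2 r s' t.
Proof.
case: s t' => [|x0 s] [|y0 t'] //.
  by move/perm_size/esym/size0nil->; exists [::].
set S0 := x0 :: s; set T0 := y0 :: t' => T0_t rST; have sz := all2_size rST.
move: T0_t; rewrite perm_sym => /(perm_iotaP y0)[Is Is_iota ->].
have Is_lt i : i \in Is -> (i < size S0)%N.
  by rewrite (perm_mem Is_iota) mem_iota sz.
exists [seq nth x0 S0 i | i <- Is].
  by apply/(perm_iotaP x0); exists Is; rewrite ?sz.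
rewrite all2E !size_map eqxx zip_map /=.
apply/allP => _ /mapP[i /Is_lt lt_i ->] /=.
exact: (all2_nthP x0 y0 sz rST).
Qed.

Lemma all2_map_in (I : eqType) (f g : I -> T) s J :
  all2 r s (map f J) -> {in s & J, forall x i, r x (f i) -> r x (g i)} ->
  all2 r s (map g J).
Proof.
elim: s J => [|x s IH] [|i J] //= /andP[rxi rsJ] fg.
rewrite fg ?mem_head //= IH // => y j y_s j_J.
by apply: fg; rewrite in_cons ?y_s ?j_J orbT.
Qed.

End All2.

Arguments all2_nthP {S T r} x0 y0 {s t}.

Section Plane.
Variable R : realType.
Implicit Types (p q c : R * R) (e : R) (a b v w : seq (R * R)).

Lemma dist2C p q : dist2 p q = dist2 q p.
Proof. by rewrite /dist2 -(sqrrN (p.1 - q.1)) -(sqrrN (p.2 - q.2)) !opprB. Qed.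

Lemma measurable_dist2 c : measurable_fun setT (fun p => dist2 p c).
Proof.
apply: (@measurableT_comp _ _ _ _ _ _ (@Num.sqrt R)).
  exact: measurable_realfun.continuous_measurable_fun (@sqrt_continuous R).
apply: measurable_realfun.measurable_funD; apply: measurable_realfun.measurable_funX;
  exact: measurable_realfun.measurable_funB.
Qed.

Lemma measurable_cball2 c e : measurable (cball2 c e).
Proof.
have := measurable_dist2 c measurableT (measurable_itv `]-oo, e]).
by rewrite setTI; congr measurable; apply/seteqP; split => p; rewrite /= in_itv.
Qed.

Lemma leb2_set0 : leb2 set0 = 0%E :> \bar R.
Proof. exact: (measure0 (lebesgue_measure \x lebesgue_measure)%E). Qed.

Lemma leb2_ge0 (A : set (R * R)) : (0 <= leb2 A)%E.
Proof. exact: (measure_ge0 (lebesgue_measure \x lebesgue_measure)%E). Qed.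

Lemma le_leb2 (A B : set (R * R)) :
  measurable A -> measurable B -> A `<=` B -> (leb2 A <= leb2 B)%E.
Proof.
move=> mA mB; apply: (le_measure (lebesgue_measure \x lebesgue_measure)%E).
- exact: mem_set mA.
- exact: mem_set mB.
Qed.

Definition close e : rel (R * R) := fun p q => dist2 p q <= e.

Lemma Delta_v_le e v w : 0 <= e ->
  (Delta_v v w <= e%:E)%E = all2 (close e) v w.
Proof.
move=> e_ge0; rewrite /Delta_v; case: eqP => [sz | sz]; last first.
  by rewrite leye_eq; apply/esym/negP => /all2_size.
rewrite lee_fin; apply/idP/idP => [le_max | /(all2_nthP (0, 0) (0, 0) sz) le_i].
  apply/(all2_nthP (0, 0) (0, 0) sz) => i lt_i.
  exact: le_trans (le_bigmax _ _ (Ordinal lt_i)) le_max.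
by apply: bigmax_le => // i _; apply: le_i.
Qed.

Lemma Delta_s_orderings_le e a b : 0 <= e ->
  (Delta_s (orderings a) (orderings b) <= e%:E)%E <->
  exists2 v, perm_eq v a & all2 (close e) v b.
Proof.
move=> e_ge0; split => [le_e | [v v_a close_vb]]; last first.
  apply: le_trans (@ereal_inf_lbound _ _ (Delta_v v b) _) _.
    by exists v => //; exists b => //; apply: perm_refl.
  by rewrite Delta_v_le.
apply: contrapT => no_match.
pose L := [seq Delta_v v w | v <- permutations a, w <- permutations b].
suff : (e%:E < \big[Order.min/+oo%E]_(x <- L) x)%E.
  rewrite ltNge => /negP; apply; apply: le_trans le_e.
  apply: le_ereal_inf_tmp => _ [v v_a [w w_b <-]]; apply: ge_bigmin_seq => //.
  by apply: allpairs_f; rewrite mem_permutations.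
rewrite big_seq; apply: lt_bigmin => [|_ /allpairsP[[v w] /= [v_a w_b ->]]].
  exact: ltry.
rewrite ltNge Delta_v_le //; apply/negP => close_vw; apply: no_match.
move: v_a w_b; rewrite !mem_permutations => v_a w_b.
have [v' v'_v close_v'b] := all2_perm_r w_b close_vw.
by exists v' => //; apply: perm_trans v'_v v_a.
Qed.

End Plane.

Lemma lee_prod (R : realType) (I : Type) (s : seq I) (f g : I -> \bar R) :
  (forall i, 0 <= f i)%E -> (forall i, f i <= g i)%E ->
  (\prod_(i <- s) f i <= \prod_(i <- s) g i)%E.
Proof.
move=> f_ge0 le_fg; elim: s => [|x s IH]; rewrite ?big_nil ?big_cons //.
by apply: lee_pmul => //; apply: prode_ge0.
Qed.

Lemma prode_rescale (R : realType) (I : Type) (s : seq I) (mu : I -> \bar R)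
    (lam a : R) : a != 0 ->
  (\prod_(x <- s) (lam%:E * mu x)
   = ((lam * a) ^+ size s)%:E * \prod_(x <- s) (mu x * (a^-1)%:E))%E.
Proof.
move=> a_neq0; elim: s => [|x s IH]; first by rewrite !big_nil mul1e.
have rescale : (lam%:E * mu x = (lam * a)%:E * (mu x * (a^-1)%:E))%E.
  by rewrite muleCA -EFinM mulfK // muleC.
by rewrite !big_cons IH exprS EFinM rescale muleACA.
Qed.

Lemma le_measure_bigsetU d (T : measurableType d) (R : realType)
    (mu : {measure set T -> \bar R}) (I : Type) (s : seq I) (F : I -> set T) :
  (forall i, measurable (F i)) ->
  (mu (\big[setU/set0]_(i <- s) F i) <= (\sum_(i <- s) mu (F i))%E)%E.
Proof.
move=> mF; elim: s => [|x s IH]; first by rewrite !big_nil measure0.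
rewrite !big_cons; apply: le_trans (measureU2 _ _ _) (leeD2l _ IH) => //.
exact: bigsetU_measurable.
Qed.

Lemma measurable_pattern_invariant d d' (T : measurableType d)
    (U : measurableType d') (n r : nat) (Z : nat -> T -> U) (C : nat -> set U)
    (Q : set T) :
  (forall i, measurable_fun setT (Z i)) -> (forall j, measurable (C j)) ->
  (forall w w', (forall i j, (i < n)%N -> (j < r)%N ->
      C j (Z i w) <-> C j (Z i w')) -> Q w -> Q w') ->
  measurable Q.
Proof.
move=> mZ mC Q_inv.
pose pattern w : {ffun 'I_n * 'I_r -> bool} :=
  [ffun ij : 'I_n * 'I_r => `[< C ij.2 (Z ij.1 w) >]].
pose cell (pat : {ffun 'I_n * 'I_r -> bool}) :=
  \bigcap_(ij in [set: 'I_n * 'I_r])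
  (if pat ij then Z ij.1 @^-1` C ij.2 else ~` (Z ij.1 @^-1` C ij.2)).
have cellE pat w : cell pat w <-> pattern w = pat.
  split => [in_cell | <- ij _]; last by rewrite ffunE; case: asboolP.
  apply/ffunP => ij; rewrite ffunE; have := in_cell ij I.
  by case: (pat ij) => /= ?; [apply/asboolP | apply/negbTE/asboolPn].
have -> : Q = \bigcup_(pat in pattern @` Q) cell pat.
  apply/seteqP; split => [w Qw | w [_ [w0 Qw0 <-] /cellE same]].
    by exists (pattern w) => //; apply/cellE.
  apply: Q_inv Qw0 => i j lt_in lt_jr.
  move/ffunP: same => /(_ (Ordinal lt_in, Ordinal lt_jr)); rewrite !ffunE /=.
  by move=> same; apply: asbool_eq_equiv; rewrite same.
apply: fin_bigcup_measurable => [|pat _]; first exact: finite_finset.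
apply: fin_bigcap_measurable => [|ij _]; first exact: finite_finset.
have := mZ ij.1 measurableT _ (mC ij.2); rewrite setTI.
by case: (pat ij) => // ?; apply: measurableC.
Qed.

Section Landmarks.
Variables (R : realType) (d : measure_display) (T : measurableType d).
Variables (P : probability T R) (lam dv eps : R) (N : T -> nat).
Variables (Y : nat -> T -> R * R) (xs : seq (R * R)).
Hypotheses (lam_ge0 : 0 <= lam) (eps_ge0 : 0 <= eps).
Hypothesis mN : forall n, measurable [set w | N w = n].
Hypothesis mY : forall i, measurable_fun setT (Y i).
(* Janossy law of the process in the disk D: [N] is Poisson of mean
   [lam * pi * dv ^+ 2] and, given [N = n], the points [Y 0, ..., Y (n-1)] are
   i.i.d. uniform on D. *)
Hypothesis janossy : forall (n : nat) (B : nat -> set (R * R)),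
  (forall i, measurable (B i)) ->
  P ([set w | N w = n] `&` \bigcap_(i in [set i | (i < n)%N]) (Y i @^-1` B i))
  = ((expR (- (lam * pi * dv ^+ 2)) / n`!%:R)%:E
      * \prod_(i < n) (lam%:E * leb2 (B i `&` cball2 (0%R : R, 0%R : R) dv)))%E.

Local Notation D := (cball2 (0%R : R, 0%R : R) dv).
Local Notation k := (size xs).

Definition visible n w :=
  [seq Y i w | i <- iota 0 n & dist2 (Y i w) (0, 0) <= dv].

Definition match_event :=
  [set w | (Delta_s (orderings xs) (orderings (visible (N w) w)) <= eps%:E)%E].

Definition escape_event := [set w | exists2 i, (i < N w)%N & ~ D (Y i w)].

Definition matched_event (ys : seq (R * R)) := [set w | N w = size ys] `&`
  \bigcap_(i in [set i | (i < size ys)%N])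
    (Y i @^-1` cball2 (nth (0, 0) ys i) eps).

(* Indexing by permutations rather than by distinct orderings keeps exactly k!
   terms in the union bound even when [xs] has repeated points. *)
Definition reordering (p : 'S_k) : seq (R * R) :=
  [tuple tnth (in_tuple xs) (p i) | i < k].

Lemma measurable_Y_preimage i B : measurable B -> measurable (Y i @^-1` B).
Proof. by move=> mB; rewrite -[_ @^-1` _]setTI; apply: mY. Qed.

Lemma measurable_matched_event ys : measurable (matched_event ys).
Proof.
apply: measurableI => //; apply: bigcap_measurableType => i _.
by apply: measurable_Y_preimage; apply: measurable_cball2.
Qed.

Lemma janossy_outside_disk_null n i : (i < n)%N ->
  P ([set w | N w = n] `&` Y i @^-1` ~` D) = 0%E.
Proof.
move=> lt_in; pose B j := if j == i then ~` D else setT.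
have mB j : measurable (B j).
  rewrite /B; case: ifP => _ //; apply: measurableC; exact: measurable_cball2.
have -> : [set w | N w = n] `&` (Y i @^-1` ~` D) =
    [set w | N w = n] `&` \bigcap_(j in [set j | (j < n)%N]) (Y j @^-1` B j).
  apply/seteqP; split => w /= [Nw Yw]; split => //.
    by move=> j _; rewrite /B; case: eqP => [->|].
  by have := Yw i lt_in; rewrite /B eqxx.
rewrite janossy // (bigD1 (Ordinal lt_in)) //= /B eqxx setICl leb2_set0.
by rewrite mule0 mul0e mule0.
Qed.

Lemma escape_event_negligible : P.-negligible escape_event.
Proof.
have -> : escape_event = \bigcup_n \bigcup_i
    (if (i < n)%N then [set w | N w = n] `&` Y i @^-1` ~` D else set0).
  apply/seteqP; split => [w [i lt_iN Dw] | w [n _ [i _]]].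
    by exists (N w) => //; exists i => //; rewrite lt_iN.
  by case: ifPn => // lt_in [Nw Dw]; exists i; rewrite ?Nw.
apply: negligible_bigcup => n; apply: negligible_bigcup => i.
case: ifPn => [lt_in | _]; last exact: negligible_set0.
apply/negligibleP; last exact: janossy_outside_disk_null.
apply: measurableI => //; apply: measurable_Y_preimage.
by apply: measurableC; apply: measurable_cball2.
Qed.

Lemma matched_event_le ys : perm_eq ys xs ->
  (P (matched_event ys) <= (expR (- (lam * pi * dv ^+ 2)) / k`!%:R)%:E
                           * \prod_(x <- xs) (lam%:E * leb2 (cball2 x eps)))%E.
Proof.
move=> ys_xs; rewrite janossy => [|i]; last exact: measurable_cball2.
rewrite -(perm_size ys_xs) -(perm_big _ ys_xs) /= (big_nth (0, 0)) big_mkord.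
apply: lee_wpmul2l; first by rewrite lee_fin divr_ge0 ?expR_ge0.
apply: lee_prod => [i | i]; first by apply: mule_ge0; rewrite ?lee_fin ?leb2_ge0.
apply: lee_wpmul2l; first by rewrite lee_fin.
apply: le_leb2; [apply: measurableI | | exact: subIsetl];
  exact: measurable_cball2.
Qed.

Lemma measurable_match_event : measurable match_event.
Proof.
have -> : match_event = \bigcup_n ([set w | N w = n] `&`
    [set w | exists2 v, perm_eq v xs & all2 (close eps) v (visible n w)]).
  apply/seteqP; split => [w /(Delta_s_orderings_le _ _ eps_ge0) match_w | ].
    by exists (N w) => //; split.
  by move=> w [n _ [<- /(Delta_s_orderings_le _ _ eps_ge0)]].
apply: bigcupT_measurable => n; apply: measurableI => //.
pose C j := if j is j'.+1 then cball2 (nth (0, 0) xs j') eps else D.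
apply: (@measurable_pattern_invariant _ _ _ _ n k.+1 Y C) => //.
  by case=> [|j]; apply: measurable_cball2.
move=> w w' same [v v_xs close_v]; exists v => //.
rewrite /visible (eq_in_filter (a2 := fun i => dist2 (Y i w) (0, 0) <= dv)).
  apply: (all2_map_in close_v) => x i x_v.
  rewrite mem_filter mem_iota => /andP[_ /andP[_ lt_in]].
  have lt_x : ((index x xs).+1 < k.+1)%N.
    by rewrite ltnS index_mem -(perm_mem v_xs).
  have [x_Yi _] := same i _ lt_in lt_x.
  by rewrite /close /C nth_index -?(perm_mem v_xs) // !(dist2C x) in x_Yi *.
move=> i; rewrite mem_iota => /andP[_ lt_in].
by have [inD inD'] := same i 0%N lt_in isT; apply/idP/idP => [/inD'|/inD].
Qed.

Lemma match_event_sub : match_event `<=`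
  escape_event `|` \big[setU/set0]_(p : 'S_k) matched_event (reordering p).
Proof.
move=> w; case: (pselect (escape_event w)) => [escaped _ | not_escaped].
  by left.
have all_visible : visible (N w) w = [seq Y i w | i <- iota 0 (N w)].
  rewrite /visible (@eq_in_filter _ _ predT) ?filter_predT // => i.
  rewrite mem_iota => /andP[_ lt_iN]; apply/idP/negP => not_in_D.
  by apply: not_escaped; exists i.
rewrite /match_event /= all_visible.
move=> /(Delta_s_orderings_le _ _ eps_ge0)[ys ys_xs close_ys].
have sz : N w = size ys by rewrite (all2_size close_ys) size_map size_iota.
suff : matched_event ys w.
  have /tuple_permP[p ->] : perm_eq ys (in_tuple xs) := ys_xs.
  by right; rewrite (bigD1 p) //=; left.
split => // i /= lt_i; move/(all2_nthP (0, 0) (0, 0)) : close_ys.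
rewrite size_map size_iota sz => /(_ erefl i lt_i).
by rewrite (nth_map 0%N) ?size_iota ?sz // nth_iota ?sz //= /close dist2C.
Qed.

Lemma match_event_le : (P match_event <= (expR (- (lam * pi * dv ^+ 2)))%:E
                         * \prod_(x <- xs) (lam%:E * leb2 (cball2 x eps)))%E.
Proof.
have [Z [mZ PZ0 escape_Z]] := escape_event_negligible.
set U := \big[setU/set0]_(p : 'S_k) matched_event (reordering p).
have mU : measurable U.
  by apply: bigsetU_measurable => p _; apply: measurable_matched_event.
apply: (@le_trans _ _ (P U)).
  rewrite -(measureU0 mU mZ PZ0).
  apply: le_measure.
  - exact/mem_set/measurable_match_event.
  - exact/mem_set/measurableU.
  - by move=> w /match_event_sub[/escape_Z|]; [right | left].
apply: le_trans (le_measure_bigsetU P _ (fun p => measurable_matched_event _)) _.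
have perm_reordering p : perm_eq (reordering p) xs.
  by apply/(@tuple_permP _ _ _ (in_tuple xs)); exists p.
apply: le_trans (lee_sum _ (fun p _ => matched_event_le (perm_reordering p))) _.
rewrite -ge0_sume_distrl => [|p _]; last by rewrite lee_fin divr_ge0 ?expR_ge0.
by rewrite sumEFin sumr_const card_Sn -[_ *+ _]mulr_natr divfK.
Qed.

End Landmarks.

Theorem lemma8 (R : realType) (d : measure_display) (T : measurableType d)
  (P : probability T R) (lam dv eps : R) (N : T -> nat) (Y : nat -> T -> R * R)
  (xs : seq (R * R)) :
  0 < lam -> 0 < dv -> 0 <= eps ->
  (forall n, measurable [set w | N w = n]) ->
  (forall i, measurable_fun setT (Y i)) ->
  (forall (n : nat) (B : nat -> set (R * R)), (forall i, measurable (B i)) ->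
     P ([set w | N w = n] `&` \bigcap_(i in [set i | (i < n)%N]) (Y i @^-1` B i))
     = ((expR (- (lam * pi * dv ^+ 2)) / n`!%:R)%:E
         * \prod_(i < n) (lam%:E * leb2 (B i `&` cball2 (0%R : R, 0%R : R) dv)))%E) ->
  let m := lam * pi * dv ^+ 2 in
  let k := size xs in
  let F0 := fun w => orderings
              [seq Y i w | i <- iota 0 (N w) & dist2 (Y i w) (0%R : R, 0%R : R) <= dv] in
  (P [set w | (Delta_s (orderings xs) (F0 w) <= eps%:E)%E]
   <= (m ^+ k * expR (- m))%:E
      * \prod_(x <- xs) (leb2 (cball2 x eps) * ((pi * dv ^+ 2)^-1)%:E))%E.
Proof.
move=> lam_gt0 dv_gt0 eps_ge0 mN mY janossy; cbv zeta.
have area_neq0 : pi * dv ^+ 2 != 0.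
  by rewrite lt0r_neq0 // mulr_gt0 ?pi_gt0 ?exprn_gt0.
apply: le_trans (match_event_le xs (ltW lam_gt0) eps_ge0 mN mY janossy) _.
by rewrite (prode_rescale _ _ lam area_neq0) muleA -EFinM mulrC -mulrA.
Qed.
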